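(* Let $t,r\in\mathbb{R}$ with $r>e^{-t}$. For all integers $n\ge\lceil r\rceil$, $$\int_{n+1}^\infty\frac{dx}{24x^2(t+\log x)^2}+\frac{1}{24(n+1)(t+\log(n+1))^2}\le\beta(t,r)-\beta_n(t,r)$$ $$\le\int_n^\infty\frac{dx}{24x^2(t+\log x)^2}+\frac{1}{24(n+\frac12)(t+\log(n+\frac12))^2}+\frac{1}{24n^2(t+\log n)^2}+\frac{1}{12n^2(t+\log n)^3}.$$ Moreover, $\beta(t,r)=\beta_n(t,r)+\frac{1+o(1)}{12n(\log n)^2}$ as $n\to\infty$.
   Context: $\operatorname{li}(x)=\int_0^x\frac{du}{\log u}$ (principal value) is the logarithmic integral, $\gamma$ the Euler–Mascheroni constant, $H_k=\sum_{j=1}^k1/j$. For real $t,r$ with $\lceil r\rceil>e^{-t}$ and real $x\ge r$, define $\beta_x(t,r)=\frac{\operatorname{li}(e^tx)}{e^t}-\sum_{r\le k<x}\frac{1}{H_k-\gamma+t}$ (sum over integers $k$), and $\beta(t,r)=\lim_{n\to\infty}\beta_n(t,r)$ (this limit exists). *)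

From Stdlib Require Import Reals Lra Lia ZArith Classical ClassicalEpsilon.
Open Scope R_scope.

Definition choose_or0 (P : R -> Prop) : R :=
  match excluded_middle_informative (exists x, P x) with
  | left H => proj1_sig (constructive_indefinite_description _ H)
  | right _ => 0
  end.

Definition lim_seq (u : nat -> R) : R := choose_or0 (fun l => Un_cv u l).

(* Riemann integral of f on [a,b] (oriented), when f is Riemann integrable;
   the value RiemannInt pr is independent of the proof pr. *)
Definition RInt (f : R -> R) (a b : R) : R :=
  choose_or0 (fun L => exists pr : Riemann_integrable f a b, RiemannInt pr = L).

Definition RInt_infty (f : R -> R) (a : R) : R :=
  choose_or0 (fun L => forall eps, eps > 0 ->
     exists M, forall y, y >= M -> Rabs (RInt f a y - L) < eps).

Definition lim_0plus (F : R -> R) : R :=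
  choose_or0 (fun L => forall eps, eps > 0 ->
     exists d, d > 0 /\ forall e, 0 < e < d -> Rabs (F e - L) < eps).

Definition li (x : R) : R :=
  lim_0plus (fun e => RInt (fun u => / ln u) 0 (1 - e) + RInt (fun u => / ln u) (1 + e) x).

Fixpoint H (k : nat) : R :=
  match k with
  | O => 0
  | S k' => H k' + / INR (S k')
  end.

Definition euler_gamma : R := lim_seq (fun n => H n - ln (INR n)).

(* Ceiling: ceil r = 1 - up(-r)  (Stdlib's up x satisfies x < up x <= x + 1). *)
Definition ceilZ (r : R) : Z := (1 - up (- r))%Z.

Fixpoint sumZ (f : Z -> R) (m : Z) (len : nat) : R :=
  match len with
  | O => 0
  | S l => f m + sumZ f (m + 1)%Z l
  end.

(* beta_x(t,r) = li(e^t x)/e^t - sum_{r <= k < x, k integer} 1/(H_k - gamma + t).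
   Integers k with r <= k < x are exactly ceil r <= k <= ceil x - 1. *)
Definition beta_x (t r x : R) : R :=
  li (exp t * x) / exp t
  - sumZ (fun k => / (H (Z.to_nat k) - euler_gamma + t)) (ceilZ r)
         (Z.to_nat (ceilZ x - ceilZ r)).

Definition beta (t r : R) : R := lim_seq (fun n => beta_x t r (INR n)).

(* Let [P x = li (e^t x) / e^t], so that [P' x = 1 / (t + ln x)] and
   [beta - beta_n = sum_(k >= n) d_k] with [d_k = P (k+1) - P k - 1 / (H_k - gamma + t)].
   A midpoint-rule Taylor bound gives [P (k+1) - P k = P' (k + 1/2) + P''' (xi) / 24], and the
   expansion [H_k - gamma = ln (k + 1/2) + O (1 / (24 k^2))], read off the series of
   [atanh (1 / (2k + 2))], puts [P' (k + 1/2) - 1 / (H_k - gamma + t)] between [f (k+1)] and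
   [f (k + 1/2)], where [f x = 1 / (24 x^2 (t + ln x)^2)]. Summing over [k >= n], the
   [P'''] terms telescope against [P''], and the [f] terms are compared with the integral of
   [f] by monotonicity and convexity. Finally [1 / (24 x (t + ln x)^2)] is, up to lower order
   terms, a primitive of [-f], which yields the asymptotics. *)

From Pilot Require Import Defs.
From Stdlib Require Import Reals Lra Lia ZArith Classical ClassicalEpsilon.
From Coquelicot Require Import Coquelicot.
Open Scope R_scope.

Ltac positivity :=
  repeat (apply Rmult_lt_0_compat || apply Rinv_0_lt_compat || apply pow_lt); try lra.

Lemma le_of_derive_nonneg (f df : R -> R) a b : a <= b ->
  (forall x, a <= x <= b -> is_derive f x (df x)) ->
  (forall x, a <= x <= b -> 0 <= df x) -> f a <= f b.
Proof.
  intros hab hd hp.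
  destruct (MVT_gen f a b df) as [c [hc e]].
  - intros x hx. apply hd. rewrite Rmin_left, Rmax_right in hx by lra. lra.
  - intros x hx. rewrite Rmin_left, Rmax_right in hx by lra.
    apply continuity_pt_filterlim, (@ex_derive_continuous R_AbsRing R_NormedModule).
    eexists; apply hd; lra.
  - rewrite Rmin_left, Rmax_right in hc by lra.
    assert (0 <= df c * (b - a)) by (apply Rmult_le_pos; [apply hp; lra | lra]). lra.
Qed.

Lemma increment_le_of_derive_le (f df : R -> R) a b C : a <= b ->
  (forall x, a <= x <= b -> is_derive f x (df x) /\ df x <= C) -> f b - f a <= C * (b - a).
Proof.
  intros hab h.
  assert (hm : (fun x => C * x - f x) a <= (fun x => C * x - f x) b).
  { apply (le_of_derive_nonneg (fun x => C * x - f x) (fun x => C - df x)); auto.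
    - intros x hx. destruct (h x hx) as [hd _]. auto_derive; [eexists; eauto|].
      rewrite (is_derive_unique (fun y : R => f y) _ _ hd). ring.
    - intros x hx. destruct (h x hx) as [_ hd]. lra. }
  simpl in hm. lra.
Qed.

Lemma is_derive_sym (f df : R -> R) (sgn m s : R) :
  is_derive f (m + s) (df (m + s)) -> is_derive f (m - s) (df (m - s)) ->
  is_derive (fun u => f (m + u) + sgn * f (m - u)) s (df (m + s) - sgn * df (m - s)).
Proof.
  intros hp hm. replace (m - s) with (m + - s) in hm by ring.
  auto_derive; [split; [eexists; eauto | split; [eexists; eauto | auto]] |].
  rewrite (is_derive_unique (fun y : R => f y) _ _ hp).
  rewrite (is_derive_unique (fun y : R => f y) _ _ hm).
  replace (m + - s) with (m - s) by ring. ring.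
Qed.

Lemma sym_increment_ge (f df q dq : R -> R) sgn m h : 0 <= h ->
  (forall x, m - h <= x <= m + h -> is_derive f x (df x)) ->
  (forall u, 0 <= u <= h -> is_derive q u (dq u) /\ dq u <= df (m + u) - sgn * df (m - u)) ->
  q h - q 0 <= f (m + h) + sgn * f (m - h) - (1 + sgn) * f m.
Proof.
  intros hh hf hq.
  assert (hm : (fun u => f (m + u) + sgn * f (m - u) - q u) 0
            <= (fun u => f (m + u) + sgn * f (m - u) - q u) h).
  { apply (le_of_derive_nonneg (fun u => f (m + u) + sgn * f (m - u) - q u)
      (fun u => df (m + u) - sgn * df (m - u) - dq u)); [lra| |].
    - intros u hu. destruct (hq u hu) as [dq_u _].
      apply (is_derive_minus (fun u => f (m + u) + sgn * f (m - u)) q); [|exact dq_u].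
      apply is_derive_sym; apply hf; lra.
    - intros u hu. destruct (hq u hu) as [_ b]. lra. }
  simpl in hm. rewrite Rplus_0_r, Rminus_0_r in hm. lra.
Qed.

(* Three integrations of [p2 >= c] over the symmetric interval [m - s, m + s]. *)
Lemma midpoint_rule_lower (P p0 p1 p2 : R -> R) m c :
  (forall x, m - /2 <= x <= m + /2 -> is_derive P x (p0 x) /\ is_derive p0 x (p1 x) /\
     is_derive p1 x (p2 x) /\ c <= p2 x) ->
  c / 24 <= P (m + /2) - P (m - /2) - p0 m.
Proof.
  intros h.
  assert (h1 : forall s, 0 <= s <= /2 -> 2 * c * s <= p1 (m + s) - p1 (m - s)).
  { intros s hs.
    assert (2 * c * s - 2 * c * 0 <= p1 (m + s) + -1 * p1 (m - s) - (1 + -1) * p1 m); [|lra].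
    apply (sym_increment_ge p1 p2 (fun u => 2 * c * u) (fun _ => 2 * c));
      [lra | intros x hx; apply h; lra|].
    intros u hu. split; [auto_derive; auto; ring|].
    destruct (h (m + u)) as [_ [_ [_ c1]]]; [lra|].
    destruct (h (m - u)) as [_ [_ [_ c2]]]; [lra|]. lra. }
  assert (h0 : forall s, 0 <= s <= /2 -> c * s ^ 2 <= p0 (m + s) + p0 (m - s) - 2 * p0 m).
  { intros s hs.
    assert (c * s ^ 2 - c * 0 ^ 2 <= p0 (m + s) + 1 * p0 (m - s) - (1 + 1) * p0 m); [|lra].
    apply (sym_increment_ge p0 p1 (fun u => c * u ^ 2) (fun u => 2 * c * u));
      [lra | intros x hx; apply h; lra|].
    intros u hu. split; [auto_derive; auto; ring|]. pose proof (h1 u ltac:(lra)). lra. }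
  assert (2 * p0 m * / 2 + c * (/ 2) ^ 3 / 3 - (2 * p0 m * 0 + c * 0 ^ 3 / 3)
          <= P (m + / 2) + -1 * P (m - / 2) - (1 + -1) * P m); [|lra].
  apply (sym_increment_ge P p0 (fun u => 2 * p0 m * u + c * u ^ 3 / 3)
    (fun u => 2 * p0 m + c * u ^ 2)); [lra | intros x hx; apply h; lra|].
  intros u hu. split; [auto_derive; auto; field|]. pose proof (h0 u ltac:(lra)). lra.
Qed.

Lemma midpoint_rule_upper (P p0 p1 p2 : R -> R) m C :
  (forall x, m - /2 <= x <= m + /2 -> is_derive P x (p0 x) /\ is_derive p0 x (p1 x) /\
     is_derive p1 x (p2 x) /\ p2 x <= C) ->
  P (m + /2) - P (m - /2) - p0 m <= C / 24.
Proof.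
  intros h.
  assert (hopp : forall (f : R -> R) x l, is_derive f x l -> is_derive (fun y => - f y) x (- l))
    by exact (fun f x l hf => is_derive_opp f x l hf).
  assert (hm : - C / 24 <= - P (m + /2) - - P (m - /2) - - p0 m).
  { apply (midpoint_rule_lower (fun x => - P x) (fun x => - p0 x) (fun x => - p1 x)
      (fun x => - p2 x)).
    intros x hx. destruct (h x hx) as [d0 [d1 [d2 b]]].
    split; [|split; [|split]]; try (apply hopp; auto). lra. }
  lra.
Qed.

Lemma midpoint_le_increment_of_convex (Psi psi dpsi : R -> R) m :
  (forall x, m - /2 <= x <= m + /2 -> is_derive Psi x (psi x) /\ is_derive psi x (dpsi x)) ->
  (forall x y, m - /2 <= x -> x <= y -> y <= m + /2 -> dpsi x <= dpsi y) ->
  psi m <= Psi (m + /2) - Psi (m - /2).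
Proof.
  intros h hmono.
  assert (h0 : forall s, 0 <= s <= /2 -> 0 <= psi (m + s) + psi (m - s) - 2 * psi m).
  { intros s hs.
    assert (0 - 0 <= psi (m + s) + 1 * psi (m - s) - (1 + 1) * psi m); [|lra].
    apply (sym_increment_ge psi dpsi (fun _ => 0) (fun _ => 0));
      [lra | intros x hx; apply h; lra|].
    intros u hu. split; [auto_derive; auto|].
    pose proof (hmono (m - u) (m + u) ltac:(lra) ltac:(lra) ltac:(lra)). lra. }
  assert (2 * psi m * / 2 - 2 * psi m * 0
          <= Psi (m + / 2) + -1 * Psi (m - / 2) - (1 + -1) * Psi m); [|lra].
  apply (sym_increment_ge Psi psi (fun u => 2 * psi m * u) (fun _ => 2 * psi m));
    [lra | intros x hx; apply h; lra|].
  intros u hu. split; [auto_derive; auto; ring|]. pose proof (h0 u ltac:(lra)). lra.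
Qed.

Lemma ln_le_sub_1 y : 0 < y -> ln y <= y - 1.
Proof. intros hy. rewrite <- (exp_ln y) at 2 by lra. pose proof (exp_ineq1_le (ln y)). lra. Qed.

Lemma ln_ge_1_sub_inv y : 0 < y -> 1 - / y <= ln y.
Proof.
  intros hy. pose proof (ln_le_sub_1 (/ y) ltac:(positivity)) as h.
  rewrite ln_Rinv in h by lra. lra.
Qed.

Lemma ln_le x y : 0 < x -> x <= y -> ln x <= ln y.
Proof.
  intros hx hxy. destruct (Req_dec x y) as [->|h]; [lra | apply Rlt_le, ln_increasing; lra].
Qed.

Lemma atanh_tail_lower x : 0 <= x < 1 -> 2 * x ^ 3 / 3 <= ln (1 + x) - ln (1 - x) - 2 * x.
Proof.
  intros hx.
  set (g := fun s => ln (1 + s) - ln (1 - s) - 2 * s - 2 * s ^ 3 / 3).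
  assert (hg : g 0 <= g x).
  { apply (le_of_derive_nonneg g (fun s => 2 * s ^ 4 / (1 - s ^ 2))); [lra| |].
    - intros s hs. unfold g. auto_derive; [repeat split; lra|]. field. split; nra.
    - intros s hs. apply Rmult_le_pos; [apply Rmult_le_pos; [lra | apply pow_le; lra]|].
      apply Rlt_le, Rinv_0_lt_compat. nra. }
  unfold g in hg. rewrite Rplus_0_r, Rminus_0_r, ln_1 in hg. lra.
Qed.

Lemma atanh_tail_upper x : 0 <= x < 1 ->
  ln (1 + x) - ln (1 - x) - 2 * x <= 2 * x ^ 3 / (3 * (1 - x ^ 2)).
Proof.
  intros hx.
  set (g := fun s => 2 * s ^ 3 / (3 * (1 - s ^ 2)) - (ln (1 + s) - ln (1 - s) - 2 * s)).
  assert (hg : g 0 <= g x).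
  { apply (le_of_derive_nonneg g (fun s => 4 * s ^ 4 / (3 * (1 - s ^ 2) ^ 2))); [lra| |].
    - intros s hs. unfold g. auto_derive; [repeat split; nra|]. field. split; nra.
    - intros s hs. apply Rmult_le_pos; [apply Rmult_le_pos; [lra | apply pow_le; lra]|].
      apply Rlt_le, Rinv_0_lt_compat. apply Rmult_lt_0_compat; [lra | apply pow_lt; nra]. }
  unfold g in hg. rewrite Rplus_0_r, Rminus_0_r, ln_1 in hg. lra.
Qed.

Lemma choose_or0_eq (P : R -> Prop) L :
  P L -> (forall x y, P x -> P y -> x = y) -> choose_or0 P = L.
Proof.
  intros hL hu. unfold choose_or0.
  destruct (excluded_middle_informative (exists x, P x)) as [h|h].
  - destruct (constructive_indefinite_description _ h) as [x hx]. simpl. apply hu; auto.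
  - exfalso. apply h. eauto.
Qed.

Lemma lim_seq_eq u l : Un_cv u l -> lim_seq u = l.
Proof. intros h. apply choose_or0_eq; auto. intros x y hx hy. eapply UL_sequence; eauto. Qed.

Lemma Un_cv_const (c : R) : Un_cv (fun _ => c) c.
Proof. intros e he. exists 0%nat. intros. unfold R_dist. rewrite Rminus_eq_0, Rabs_R0. lra. Qed.

Lemma Un_cv_of_close (u v w : nat -> R) l N :
  (forall n, (N <= n)%nat -> Rabs (u n - v n) <= w n) -> Un_cv v l -> Un_cv w 0 -> Un_cv u l.
Proof.
  intros hc hv hw eps he.
  destruct (hv (eps / 2) ltac:(lra)) as [N1 h1].
  destruct (hw (eps / 2) ltac:(lra)) as [N2 h2].
  exists (max N (max N1 N2)). intros n hn.
  specialize (hc n ltac:(lia)). specialize (h1 n ltac:(lia)). specialize (h2 n ltac:(lia)).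
  unfold R_dist in *. rewrite Rminus_0_r in h2.
  pose proof (Rabs_triang (u n - v n) (v n - l)) as ht.
  replace (u n - v n + (v n - l)) with (u n - l) in ht by ring.
  pose proof (Rle_abs (w n)). lra.
Qed.

Lemma Un_cv_eventually_eq (u v : nat -> R) l N :
  (forall n, (N <= n)%nat -> u n = v n) -> Un_cv v l -> Un_cv u l.
Proof.
  intros he hv. apply (Un_cv_of_close u v (fun _ => 0) l N); [|auto|apply Un_cv_const].
  intros n hn. rewrite he by auto. rewrite Rminus_eq_0, Rabs_R0. lra.
Qed.

Lemma Un_cv_squeeze (a u b : nat -> R) l N : (forall n, (N <= n)%nat -> a n <= u n <= b n) ->
  Un_cv a l -> Un_cv b l -> Un_cv u l.
Proof.
  intros h ha hb eps he. destruct (ha eps he) as [N1 h1]. destruct (hb eps he) as [N2 h2].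
  exists (max N (max N1 N2)). intros n hn. specialize (h n ltac:(lia)).
  specialize (h1 n ltac:(lia)). specialize (h2 n ltac:(lia)). unfold R_dist in *.
  apply Rabs_def2 in h1. apply Rabs_def2 in h2. apply Rabs_def1; lra.
Qed.

Lemma Un_cv_0_of_le_inv (u : nat -> R) C N :
  (forall n, (N <= n)%nat -> Rabs (u n) <= C * / (INR n + 1)) -> Un_cv u 0.
Proof.
  intros hb. apply (Un_cv_of_close u (fun _ => 0) (fun n => Rabs C * / (INR n + 1)) 0 N).
  - intros n hn. rewrite Rminus_0_r. eapply Rle_trans; [apply hb; auto|].
    apply Rmult_le_compat_r; [apply Rlt_le, RinvN_pos | apply Rle_abs].
  - apply Un_cv_const.
  - replace 0 with (Rabs C * 0) by ring. apply CV_mult; [apply Un_cv_const | exact RinvN_cv].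
Qed.

Lemma INR_unbounded y : exists N, forall n, (N <= n)%nat -> y <= INR n.
Proof.
  destruct (archimed y) as [h1 _].
  exists (Z.to_nat (up y)). intros n hn. apply le_INR in hn.
  destruct (Z_le_gt_dec 0 (up y)).
  - rewrite INR_IZR_INZ, Z2Nat.id in hn by lia. lra.
  - pose proof (pos_INR n). assert (IZR (up y) < 0) by (apply IZR_lt; lia). lra.
Qed.

Lemma Un_cv_inv_shifted_ln s a : 0 <= a -> Un_cv (fun n => / (s + ln (INR n + a))) 0.
Proof.
  intros ha eps he.
  destruct (INR_unbounded (exp (/ eps - s) + 1)) as [N hN]. exists N. intros n hn.
  specialize (hN n hn). pose proof (exp_pos (/ eps - s)).
  assert (hl : ln (exp (/ eps - s)) < ln (INR n + a)) by (apply ln_increasing; lra).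
  rewrite ln_exp in hl. assert (0 < / eps) by positivity.
  unfold R_dist. rewrite Rminus_0_r, Rabs_pos_eq by (apply Rlt_le; positivity).
  rewrite <- (Rinv_inv eps). apply Rinv_lt_contravar; [positivity | lra].
Qed.

Lemma Un_cv_INR_div_add a : 0 <= a -> Un_cv (fun n => INR n / (INR n + a)) 1.
Proof.
  intros ha.
  apply (Un_cv_of_close _ (fun _ => 1) (fun n => 2 * a * / (INR n + 1)) 1 1);
    [| apply Un_cv_const |].
  - intros n hn. apply le_INR in hn. simpl in hn.
    replace (INR n / (INR n + a) - 1) with (- (a * / (INR n + a))) by (field; lra).
    rewrite Rabs_Ropp, Rabs_pos_eq by (apply Rmult_le_pos; [lra | apply Rlt_le; positivity]).
    replace (2 * a * / (INR n + 1)) with (a * (2 * / (INR n + 1))) by ring.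
    apply Rmult_le_compat_l; [lra|].
    replace (2 * / (INR n + 1)) with (/ ((INR n + 1) / 2)) by (field; lra).
    apply Rinv_le_contravar; lra.
  - replace 0 with (2 * a * 0) by ring. apply CV_mult; [apply Un_cv_const | exact RinvN_cv].
Qed.

Lemma Un_cv_inv_INR : Un_cv (fun n => / INR n) 0.
Proof.
  apply (Un_cv_0_of_le_inv _ 2 1). intros n hn. apply le_INR in hn. simpl in hn.
  rewrite Rabs_pos_eq by (apply Rlt_le; positivity).
  replace (2 * / (INR n + 1)) with (/ ((INR n + 1) / 2)) by (field; lra).
  apply Rinv_le_contravar; lra.
Qed.

Definition harm_dev k := H k - ln (INR k + / 2).

Lemma harm_dev_step k : harm_dev k - harm_dev (S k) =
  ln (1 + / (2 * (INR k + 1))) - ln (1 - / (2 * (INR k + 1))) - 2 * / (2 * (INR k + 1)).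
Proof.
  pose proof (pos_INR k) as hk.
  unfold harm_dev. change (H (S k)) with (H k + / INR (S k)). rewrite S_INR.
  replace (1 + / (2 * (INR k + 1))) with ((INR k + 1 + / 2) / (INR k + 1)) by (field; lra).
  replace (1 - / (2 * (INR k + 1))) with ((INR k + / 2) / (INR k + 1)) by (field; lra).
  rewrite !ln_div by lra.
  replace (2 * / (2 * (INR k + 1))) with (/ (INR k + 1)) by (field; lra). lra.
Qed.

Lemma harm_dev_step_bounds k :
  / (24 * (INR k + 1) ^ 2) - / (24 * (INR k + 2) ^ 2) <= harm_dev k - harm_dev (S k)
  <= / (24 * (INR k + / 2) ^ 2) - / (24 * (INR k + 3 / 2) ^ 2).
Proof.
  rewrite harm_dev_step. pose proof (pos_INR k) as hk.
  set (m := INR k + 1).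
  assert (hx : 0 <= / (2 * m) < 1).
  { unfold m. split; [apply Rlt_le; positivity|].
    assert (/ (2 * (INR k + 1)) <= / 2) by (apply Rinv_le_contravar; lra). lra. }
  pose proof (atanh_tail_lower _ hx). pose proof (atanh_tail_upper _ hx).
  replace (INR k + 2) with (m + 1) by (unfold m; lra).
  replace (INR k + / 2) with (m - / 2) by (unfold m; lra).
  replace (INR k + 3 / 2) with (m + / 2) by (unfold m; lra).
  assert (el : 2 * (/ (2 * m)) ^ 3 / 3 - (/ (24 * m ^ 2) - / (24 * (m + 1) ^ 2))
             = (3 * m + 2) / (24 * m ^ 3 * (m + 1) ^ 2)) by (unfold m; field; lra).
  assert (eu : / (24 * (m - / 2) ^ 2) - / (24 * (m + / 2) ^ 2)
               - 2 * (/ (2 * m)) ^ 3 / (3 * (1 - (/ (2 * m)) ^ 2))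
             = / (3 * m * (4 * m ^ 2 - 1) ^ 2)) by (unfold m; field; repeat split; nra).
  assert (0 <= (3 * m + 2) / (24 * m ^ 3 * (m + 1) ^ 2))
    by (unfold m; apply Rlt_le; unfold Rdiv; positivity).
  assert (0 <= / (3 * m * (4 * m ^ 2 - 1) ^ 2))
    by (apply Rlt_le, Rinv_0_lt_compat, Rmult_lt_0_compat;
        [unfold m; lra | apply pow_lt; unfold m; nra]).
  lra.
Qed.

Lemma harm_dev_telescope k M :
  / (24 * (INR k + 1) ^ 2) - / (24 * (INR (k + M) + 1) ^ 2) <= harm_dev k - harm_dev (k + M)
  <= / (24 * (INR k + / 2) ^ 2) - / (24 * (INR (k + M) + / 2) ^ 2).
Proof.
  induction M as [|M IH]; [rewrite Nat.add_0_r; lra|].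
  replace (k + S M)%nat with (S (k + M)) by lia. rewrite S_INR.
  pose proof (harm_dev_step_bounds (k + M)) as hs.
  replace (INR (k + M) + 2) with (INR (k + M) + 1 + 1) in hs by ring.
  replace (INR (k + M) + 3 / 2) with (INR (k + M) + 1 + / 2) in hs by field. lra.
Qed.

Lemma Un_cv_inv_24_sq k a : / 2 <= a -> Un_cv (fun M => / (24 * (INR (k + M) + a) ^ 2)) 0.
Proof.
  intros ha. apply (Un_cv_0_of_le_inv _ 2 0). intros M _.
  pose proof (pos_INR M) as hM. rewrite plus_INR. pose proof (pos_INR k).
  rewrite Rabs_pos_eq by (apply Rlt_le; positivity).
  replace (2 * / (INR M + 1)) with (/ ((INR M + 1) / 2)) by (field; lra).
  apply Rinv_le_contravar; [positivity | nra].
Qed.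

Lemma harm_dev_decreasing : Un_decreasing harm_dev.
Proof.
  intros n. pose proof (harm_dev_step_bounds n) as [hl _]. pose proof (pos_INR n).
  assert (/ (24 * (INR n + 2) ^ 2) <= / (24 * (INR n + 1) ^ 2))
    by (apply Rinv_le_contravar; [positivity | nra]).
  lra.
Qed.

Lemma harm_dev_has_lb : has_lb harm_dev.
Proof.
  exists (- (harm_dev 0 - / (24 * (INR 0 + / 2) ^ 2))). intros x [i ->]. unfold opp_seq.
  pose proof (harm_dev_telescope 0 i) as [_ hu]. pose proof (pos_INR (0 + i)).
  assert (0 < / (24 * (INR (0 + i) + / 2) ^ 2)) by positivity. simpl Nat.add in *. lra.
Qed.

Lemma harm_dev_limit_bounds g k : Un_cv harm_dev g ->
  / (24 * (INR k + 1) ^ 2) <= harm_dev k - g <= / (24 * (INR k + / 2) ^ 2).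
Proof.
  intros hg.
  assert (hd : Un_cv (fun M => harm_dev k - harm_dev (k + M)) (harm_dev k - g)).
  { apply CV_minus; [apply Un_cv_const|].
    intros e he. destruct (hg e he) as [N hN]. exists N. intros n hn. apply hN. lia. }
  assert (hcv : forall a, / 2 <= a ->
    Un_cv (fun M => / (24 * (INR k + a) ^ 2) - / (24 * (INR (k + M) + a) ^ 2))
      (/ (24 * (INR k + a) ^ 2))).
  { intros a ha. pattern (/ (24 * (INR k + a) ^ 2)) at 2.
    rewrite <- (Rminus_0_r (/ (24 * (INR k + a) ^ 2))).
    apply CV_minus; [apply Un_cv_const | apply Un_cv_inv_24_sq; lra]. }
  split.
  - apply (Rle_cv_lim (fun M => proj1 (harm_dev_telescope k M)) (hcv 1 ltac:(lra)) hd).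
  - apply (Rle_cv_lim (fun M => proj2 (harm_dev_telescope k M)) hd (hcv (/ 2) ltac:(lra))).
Qed.

Lemma euler_gamma_harm_dev : Un_cv harm_dev euler_gamma.
Proof.
  destruct (decreasing_cv harm_dev harm_dev_decreasing harm_dev_has_lb) as [g hg].
  replace euler_gamma with g; [exact hg|]. symmetry.
  unfold euler_gamma. apply lim_seq_eq.
  apply (Un_cv_of_close _ harm_dev (fun n => / (INR n + 1)) _ 1); [|exact hg|exact RinvN_cv].
  intros n hn. apply le_INR in hn. simpl in hn. unfold harm_dev.
  replace (H n - ln (INR n) - (H n - ln (INR n + / 2))) with (ln ((INR n + / 2) / INR n))
    by (rewrite ln_div by lra; ring).
  pose proof (ln_le_sub_1 ((INR n + / 2) / INR n) ltac:(apply Rdiv_lt_0_compat; lra)).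
  pose proof (ln_ge_1_sub_inv ((INR n + / 2) / INR n) ltac:(apply Rdiv_lt_0_compat; lra)).
  replace ((INR n + / 2) / INR n - 1) with (/ (2 * INR n)) in * by (field; lra).
  replace (1 - / ((INR n + / 2) / INR n)) with (/ (2 * INR n + 1)) in * by (field; lra).
  assert (0 < / (2 * INR n + 1)) by positivity.
  assert (/ (2 * INR n) <= / (INR n + 1)) by (apply Rinv_le_contravar; lra).
  rewrite Rabs_pos_eq; lra.
Qed.

Lemma harmonic_sub_gamma_bounds k :
  / (24 * (INR k + 1) ^ 2) <= H k - euler_gamma - ln (INR k + / 2)
  <= / (24 * (INR k + / 2) ^ 2).
Proof.
  pose proof (harm_dev_limit_bounds _ k euler_gamma_harm_dev) as hb. unfold harm_dev in hb. lra.
Qed.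

Lemma RInt_eq_Coquelicot f a b : a <= b -> (forall x, a <= x <= b -> continuity_pt f x) ->
  Defs.RInt f a b = RInt f a b.
Proof.
  intros hab hc. pose (pr := continuity_implies_RiemannInt hab hc).
  unfold Defs.RInt. rewrite (RInt_Reals f a b pr).
  apply choose_or0_eq; [eauto|].
  intros x y [p1 <-] [p2 <-]. apply RiemannInt_P5.
Qed.

Lemma ex_RInt_of_continuity_pt f a b :
  a <= b -> (forall x, a <= x <= b -> continuity_pt f x) -> ex_RInt f a b.
Proof.
  intros hab hc. apply (@ex_RInt_continuous R_CompleteNormedModule). intros z hz.
  rewrite Rmin_left, Rmax_right in hz by lra. apply continuity_pt_filterlim, hc; lra.
Qed.

Lemma continuity_pt_of_derive f df x : is_derive f x df -> continuity_pt f x.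
Proof.
  intros h. apply continuity_pt_filterlim, (@ex_derive_continuous R_AbsRing R_NormedModule).
  eexists; eauto.
Qed.

Definition inv_ln (u : R) := / ln u.

Lemma ln_nonpos x : x <= 0 -> ln x = 0.
Proof. intros h. unfold ln. destruct (Rlt_dec 0 x); [exfalso; lra | reflexivity]. Qed.

Lemma inv_ln_continuity_pt x : 0 <= x -> x <> 1 -> continuity_pt inv_ln x.
Proof.
  intros hx h1. destruct (Req_dec x 0) as [->|hx0].
  - (* [ln] is [0] on [x <= 0], so [inv_ln] is continuous at [0] from both sides *)
    unfold continuity_pt, continue_in, limit1_in, limit_in. intros eps he.
    exists (exp (- / eps)). split; [apply exp_pos|].
    intros y [_ hy]. simpl in *. unfold R_dist in *. rewrite Rminus_0_r in *.
    unfold inv_ln. rewrite (ln_nonpos 0), Rinv_0, Rminus_0_r by lra.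
    destruct (Rle_lt_dec y 0) as [hn|hp].
    + rewrite ln_nonpos, Rinv_0, Rabs_R0 by lra. lra.
    + rewrite Rabs_pos_eq in hy by lra.
      assert (ln y < - / eps) by (rewrite <- (ln_exp (- / eps)); apply ln_increasing; lra).
      assert (0 < / eps) by positivity.
      rewrite Rabs_left by (apply Rinv_lt_0_compat; lra).
      rewrite <- (Rinv_inv eps). replace (- / ln y) with (/ (- ln y)) by (field; lra).
      apply Rinv_lt_contravar; [apply Rmult_lt_0_compat|]; lra.
  - unfold inv_ln. apply continuity_pt_inv.
    + apply derivable_continuous_pt. exists (/ x). apply derivable_pt_lim_ln. lra.
    + intros e. apply h1. rewrite <- (exp_ln x) by lra. rewrite e. apply exp_0.
Qed.

Lemma ex_RInt_inv_ln a b : 0 <= a -> 0 <= b -> (a < 1 /\ b < 1 \/ 1 < a /\ 1 < b) ->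
  ex_RInt inv_ln a b.
Proof.
  intros ha hb hab. destruct (Rle_dec a b).
  - apply ex_RInt_of_continuity_pt; [lra|]. intros; apply inv_ln_continuity_pt; lra.
  - apply ex_RInt_swap, ex_RInt_of_continuity_pt; [lra|].
    intros; apply inv_ln_continuity_pt; lra.
Qed.

(* The poles of [1 / ln] at [1 -/+ s] cancel to first order. *)
Lemma inv_ln_sym_bound s : 0 < s <= / 2 -> Rabs (inv_ln (1 - s) + inv_ln (1 + s)) <= 2.
Proof.
  intros hs. unfold inv_ln.
  set (A := ln (1 - s)). set (B := ln (1 + s)).
  assert (hA : A <= - s) by (pose proof (ln_le_sub_1 (1 - s)); unfold A; lra).
  assert (hB : 2 * s / 3 <= B).
  { pose proof (ln_ge_1_sub_inv (1 + s) ltac:(lra)).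
    assert (2 * s / 3 <= 1 - / (1 + s)).
    { replace (1 - / (1 + s)) with (2 * s / 3 + s * (1 - 2 * s) / (3 * (1 + s)))
        by (field; lra).
      assert (0 <= s * (1 - 2 * s) / (3 * (1 + s)))
        by (apply Rmult_le_pos; [apply Rmult_le_pos; lra | apply Rlt_le; positivity]).
      lra. }
    unfold B; lra. }
  assert (hAB : ln (1 - s ^ 2) = A + B)
    by (unfold A, B; rewrite <- ln_mult by lra; f_equal; ring).
  assert (hAB_le : A + B <= 0)
    by (rewrite <- hAB; pose proof (ln_le_sub_1 (1 - s ^ 2) ltac:(nra)); nra).
  assert (hAB_ge : - (4 * s ^ 2 / 3) <= A + B).
  { rewrite <- hAB. pose proof (ln_ge_1_sub_inv (1 - s ^ 2) ltac:(nra)).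
    assert (- (4 * s ^ 2 / 3) <= 1 - / (1 - s ^ 2)).
    { replace (1 - / (1 - s ^ 2))
        with (- (4 * s ^ 2 / 3) + s ^ 2 * (1 - 4 * s ^ 2) / (3 * (1 - s ^ 2))) by (field; nra).
      assert (0 <= s ^ 2 * (1 - 4 * s ^ 2) / (3 * (1 - s ^ 2)))
        by (apply Rmult_le_pos; [apply Rmult_le_pos; nra | apply Rlt_le, Rinv_0_lt_compat; nra]).
      lra. }
    lra. }
  assert (hprod : A * B <= - (2 * s ^ 2 / 3)) by nra.
  replace (/ A + / B) with ((A + B) * / (A * B)) by (field; lra).
  assert (hinv : / (A * B) < 0) by (apply Rinv_lt_0_compat; nra).
  rewrite Rabs_pos_eq by nra.
  apply (Rmult_le_reg_r (- (A * B))); [nra|].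
  replace ((A + B) * / (A * B) * - (A * B)) with (- (A + B)) by (field; nra). nra.
Qed.

Definition li_trunc e := RInt inv_ln 0 (1 - e) + RInt inv_ln (1 + e) 2.

Lemma li_trunc_sub e e' : 0 < e <= e' -> e' <= / 2 ->
  li_trunc e - li_trunc e' = RInt (fun s => inv_ln (1 - s) + inv_ln (1 + s)) e e'.
Proof.
  intros h1 h2. unfold li_trunc.
  rewrite <- (RInt_Chasles inv_ln 0 (1 - e') (1 - e)) by (apply ex_RInt_inv_ln; lra).
  rewrite <- (RInt_Chasles inv_ln (1 + e) (1 + e') 2) by (apply ex_RInt_inv_ln; lra).
  change (plus ?a ?b) with (a + b).
  assert (hhi : RInt inv_ln (1 + e) (1 + e') = RInt (fun s => inv_ln (1 + s)) e e').
  { replace (1 + e) with (1 * e + 1) by ring. replace (1 + e') with (1 * e' + 1) by ring.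
    rewrite <- RInt_comp_lin by (apply ex_RInt_inv_ln; lra).
    apply RInt_ext. intros x _. replace (1 * x + 1) with (1 + x) by ring. exact (scal_one _). }
  assert (hlo : RInt inv_ln (1 - e') (1 - e) = RInt (fun s => inv_ln (1 - s)) e e').
  { assert (hex : ex_RInt inv_ln (-1 * e + 1) (-1 * e' + 1))
      by (apply ex_RInt_inv_ln; lra).
    rewrite <- opp_RInt_swap by (apply ex_RInt_swap; apply ex_RInt_inv_ln; lra).
    replace (1 - e) with (-1 * e + 1) by ring. replace (1 - e') with (-1 * e' + 1) by ring.
    rewrite <- RInt_comp_lin by exact hex.
    rewrite <- RInt_opp by exact (ex_RInt_comp_lin inv_ln (-1) 1 e e' hex).
    apply RInt_ext. intros x _.
    change (- (-1 * inv_ln (-1 * x + 1)) = inv_ln (1 - x)).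
    replace (-1 * x + 1) with (1 - x) by ring. ring. }
  rewrite hhi, hlo.
  rewrite (RInt_plus (fun s => inv_ln (1 - s)) (fun s => inv_ln (1 + s)));
    [change (plus ?a ?b) with (a + b); ring | |];
    apply ex_RInt_of_continuity_pt; try lra; intros x hx;
    [apply (continuity_pt_comp (fun s => 1 - s)) | apply (continuity_pt_comp (fun s => 1 + s))];
    try reg; apply inv_ln_continuity_pt; lra.
Qed.

Lemma li_trunc_lipschitz e e' : 0 < e <= / 2 -> 0 < e' <= / 2 ->
  Rabs (li_trunc e - li_trunc e') <= 2 * Rabs (e - e').
Proof.
  assert (hle : forall e e', 0 < e <= e' -> e' <= / 2 ->
            Rabs (li_trunc e - li_trunc e') <= 2 * Rabs (e - e')).
  { intros a b hab hb. rewrite li_trunc_sub by lra.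
    rewrite (Rabs_minus_sym a b), (Rabs_pos_eq (b - a)) by lra. rewrite Rmult_comm.
    apply abs_RInt_le_const; [lra | |].
    - apply ex_RInt_of_continuity_pt; [lra|]. intros x hx. apply continuity_pt_plus;
        [apply (continuity_pt_comp (fun s => 1 - s)) | apply (continuity_pt_comp (fun s => 1 + s))];
        try reg; apply inv_ln_continuity_pt; lra.
    - intros x hx. apply inv_ln_sym_bound. lra. }
  intros h1 h2. destruct (Rle_dec e e'); [apply hle; lra|].
  rewrite Rabs_minus_sym, (Rabs_minus_sym e). apply hle; lra.
Qed.

Lemma li_trunc_has_limit : exists L, forall eps, eps > 0 ->
  exists d, d > 0 /\ forall e, 0 < e < d -> Rabs (li_trunc e - L) < eps.
Proof.
  set (x := fun n => / (INR n + 2)).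
  assert (hx : forall n, 0 < x n <= / 2 /\ x n <= / (INR n + 1)).
  { intros n. pose proof (pos_INR n). unfold x.
    repeat split; [positivity | apply Rinv_le_contravar; lra | apply Rinv_le_contravar; lra]. }
  assert (hsmall : forall eps, eps > 0 -> exists N, forall n, (N <= n)%nat -> x n < eps).
  { intros eps he. pose proof RinvN_cv as hcv. destruct (hcv eps he) as [N hN].
    exists N. intros n hn.
    specialize (hN n hn). unfold R_dist in hN. simpl in hN.
    rewrite Rminus_0_r, Rabs_pos_eq in hN by (apply Rlt_le, RinvN_pos).
    pose proof (hx n). lra. }
  assert (hc : Cauchy_crit (fun n => li_trunc (x n))).
  { intros eps he. destruct (hsmall (eps / 4) ltac:(lra)) as [N hN].
    exists N. intros n m hn hm. unfold R_dist.
    pose proof (li_trunc_lipschitz _ _ (proj1 (hx n)) (proj1 (hx m))) as hl.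
    pose proof (hN n hn). pose proof (hN m hm). pose proof (hx n). pose proof (hx m).
    assert (Rabs (x n - x m) < eps / 4) by (apply Rabs_def1; lra). lra. }
  destruct (Rcomplete.R_complete _ hc) as [L hL].
  exists L. intros eps he.
  destruct (hL (eps / 2) ltac:(lra)) as [N1 h1].
  destruct (hsmall (eps / 8) ltac:(lra)) as [N2 h2].
  set (N := max N1 N2). specialize (h1 N ltac:(lia)). specialize (h2 N ltac:(lia)).
  unfold R_dist in h1. pose proof (hx N) as hxN.
  exists (x N). split; [lra|]. intros e he'.
  pose proof (li_trunc_lipschitz e (x N) ltac:(lra) (proj1 hxN)) as hl.
  rewrite (Rabs_left1 (e - x N)) in hl by lra.
  pose proof (Rabs_triang (li_trunc e - li_trunc (x N)) (li_trunc (x N) - L)) as ht.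
  replace (li_trunc e - li_trunc (x N) + (li_trunc (x N) - L)) with (li_trunc e - L) in ht
    by ring.
  lra.
Qed.

Lemma lim_0plus_eq F L : (forall eps, eps > 0 ->
    exists d, d > 0 /\ forall e, 0 < e < d -> Rabs (F e - L) < eps) ->
  lim_0plus F = L.
Proof.
  intros h. apply choose_or0_eq; auto.
  intros x y hx hy. apply Rminus_diag_uniq, Rabs_eq_0, Rle_antisym; [|apply Rabs_pos].
  apply le_epsilon. intros eps he.
  destruct (hx (eps / 2) ltac:(lra)) as [d1 [hd1 h1]].
  destruct (hy (eps / 2) ltac:(lra)) as [d2 [hd2 h2]].
  set (e := Rmin d1 d2 / 2).
  pose proof (Rmin_l d1 d2). pose proof (Rmin_r d1 d2).
  pose proof (Rmin_glb_lt d1 d2 0 hd1 hd2).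
  specialize (h1 e ltac:(unfold e; lra)). specialize (h2 e ltac:(unfold e; lra)).
  pose proof (Rabs_triang (x - F e) (F e - y)) as ht.
  replace (x - F e + (F e - y)) with (x - y) in ht by ring.
  rewrite Rabs_minus_sym in h1. lra.
Qed.

Lemma li_eq_const_add : exists L, forall z, 1 < z -> li z = L + RInt inv_ln 2 z.
Proof.
  destruct li_trunc_has_limit as [L hL]. exists L. intros z hz.
  unfold li. change (fun u => / ln u) with inv_ln. apply lim_0plus_eq.
  intros eps he. destruct (hL eps he) as [d [hd h]].
  exists (Rmin d (Rmin (/ 2) (z - 1))). split.
  { apply Rmin_glb_lt; auto. apply Rmin_glb_lt; lra. }
  intros e he'.
  pose proof (Rmin_l d (Rmin (/ 2) (z - 1))). pose proof (Rmin_r d (Rmin (/ 2) (z - 1))).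
  pose proof (Rmin_l (/ 2) (z - 1)). pose proof (Rmin_r (/ 2) (z - 1)).
  rewrite !RInt_eq_Coquelicot by (lra || (intros; apply inv_ln_continuity_pt; lra)).
  rewrite <- (RInt_Chasles inv_ln (1 + e) 2 z) by (apply ex_RInt_inv_ln; lra).
  change (plus ?x ?y) with (x + y).
  replace (RInt inv_ln 0 (1 - e) + (RInt inv_ln (1 + e) 2 + RInt inv_ln 2 z)
           - (L + RInt inv_ln 2 z)) with (li_trunc e - L) by (unfold li_trunc; ring).
  apply h. lra.
Qed.

Lemma li_sub a b : 1 < a -> 1 < b -> li b - li a = RInt inv_ln a b.
Proof.
  intros ha hb. destruct li_eq_const_add as [L hL]. rewrite (hL a ha), (hL b hb).
  rewrite <- (RInt_Chasles inv_ln 2 a b) by (apply ex_RInt_inv_ln; lra).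
  change (plus ?x ?y) with (x + y). ring.
Qed.

Lemma RInt_infty_eq f a L : (forall x, a <= x -> continuity_pt f x) ->
  (forall eps, eps > 0 -> exists M, forall y, y >= M -> Rabs (RInt f a y - L) < eps) ->
  RInt_infty f a = L.
Proof.
  intros hc hL. unfold RInt_infty. apply choose_or0_eq.
  - intros eps he. destruct (hL eps he) as [M hM]. exists (Rmax a M). intros y hy.
    pose proof (Rmax_l a M). pose proof (Rmax_r a M).
    rewrite RInt_eq_Coquelicot by (lra || (intros; apply hc; lra)). apply hM. lra.
  - intros x y hx hy. apply Rminus_diag_uniq, Rabs_eq_0, Rle_antisym; [|apply Rabs_pos].
    apply le_epsilon. intros eps he.
    destruct (hx (eps / 2) ltac:(lra)) as [M1 g1].
    destruct (hy (eps / 2) ltac:(lra)) as [M2 g2].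
    set (z := Defs.RInt f a (Rmax M1 M2)).
    specialize (g1 (Rmax M1 M2) (Rle_ge _ _ (Rmax_l _ _))).
    specialize (g2 (Rmax M1 M2) (Rle_ge _ _ (Rmax_r _ _))).
    pose proof (Rabs_triang (x - z) (z - y)) as ht. fold z in g1, g2.
    rewrite Rabs_minus_sym in g1. replace (x - z + (z - y)) with (x - y) in ht by ring. lra.
Qed.

Lemma ceilZ_ge r : r <= IZR (ceilZ r).
Proof. unfold ceilZ. destruct (archimed (- r)) as [h1 h2]. rewrite minus_IZR. simpl. lra. Qed.

Lemma ceilZ_INR n : ceilZ (INR n) = Z.of_nat n.
Proof.
  unfold ceilZ. rewrite INR_IZR_INZ.
  replace (up (- IZR (Z.of_nat n))) with (- Z.of_nat n + 1)%Z; [lia|].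
  apply tech_up; rewrite plus_IZR, opp_IZR; simpl; lra.
Qed.

Lemma sumZ_S g m M : sumZ g m (S M) = sumZ g m M + g (m + Z.of_nat M)%Z.
Proof.
  revert m. induction M as [|M IH]; intros m.
  - simpl. rewrite Z.add_0_r. ring.
  - change (sumZ g m (S (S M))) with (g m + sumZ g (m + 1)%Z (S M)).
    rewrite IH. simpl sumZ. rewrite Nat2Z.inj_succ.
    replace (m + 1 + Z.of_nat M)%Z with (m + Z.succ (Z.of_nat M))%Z by lia. ring.
Qed.

Lemma inv_pow_le c x y Lx Ly (a b : nat) : 0 < c -> 0 < x <= y -> 0 < Lx <= Ly ->
  / (c * y ^ a * Ly ^ b) <= / (c * x ^ a * Lx ^ b).
Proof.
  intros hc hx hL. apply Rinv_le_contravar; [positivity|].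
  apply Rmult_le_compat; [apply Rlt_le; positivity | apply Rlt_le; positivity | |].
  - apply Rmult_le_compat_l; [lra | apply pow_incr; lra].
  - apply pow_incr; lra.
Qed.

Section Shifted_log.

Variable t : R.

Lemma shifted_log_pos x : exp (- t) < x -> 0 < x /\ 0 < t + ln x.
Proof.
  intros h. pose proof (exp_pos (- t)). split; [lra|].
  apply ln_increasing in h; [|lra]. rewrite ln_exp in h. lra.
Qed.

Lemma shifted_log_le x y : exp (- t) < x -> x <= y -> 0 < t + ln x <= t + ln y.
Proof.
  intros hx hy. destruct (shifted_log_pos x hx). pose proof (ln_le x y ltac:(lra) hy). lra.
Qed.

Ltac derive_side_conditions := repeat split; try lra; apply Rgt_not_eq; positivity.

(* [phi0] is the derivative of [scaled_li] below and [phi (i+1)] is the derivative of [phi i]. *)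
Definition phi0 x := / (t + ln x).
Definition phi1 x := - / (x * (t + ln x) ^ 2).
Definition phi2 x := (t + ln x + 2) / (x ^ 2 * (t + ln x) ^ 3).
Definition phi3 x := - (2 * (t + ln x) ^ 2 + 6 * (t + ln x) + 6) / (x ^ 3 * (t + ln x) ^ 4).

Lemma is_derive_phi0 x : exp (- t) < x -> is_derive phi0 x (phi1 x).
Proof.
  intros h. destruct (shifted_log_pos x h). unfold phi0, phi1.
  auto_derive; [derive_side_conditions | field; split; lra].
Qed.

Lemma is_derive_phi1 x : exp (- t) < x -> is_derive phi1 x (phi2 x).
Proof.
  intros h. destruct (shifted_log_pos x h). unfold phi1, phi2.
  auto_derive; [derive_side_conditions | field; split; lra].
Qed.

Lemma is_derive_phi2 x : exp (- t) < x -> is_derive phi2 x (phi3 x).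
Proof.
  intros h. destruct (shifted_log_pos x h). unfold phi2, phi3.
  auto_derive; [derive_side_conditions | field; split; lra].
Qed.

Definition tail_density x := / (24 * x ^ 2 * (t + ln x) ^ 2).
Definition tail_density' x := - (t + ln x + 1) / (12 * x ^ 3 * (t + ln x) ^ 3).
Definition tail_majorant x := / (24 * x * (t + ln x) ^ 2).

Lemma is_derive_tail_density x : exp (- t) < x -> is_derive tail_density x (tail_density' x).
Proof.
  intros h. destruct (shifted_log_pos x h). unfold tail_density, tail_density'.
  auto_derive; [derive_side_conditions | field; split; lra].
Qed.

Lemma is_derive_tail_majorant x : exp (- t) < x ->
  is_derive tail_majorant x (- (tail_density x + / (12 * x ^ 2 * (t + ln x) ^ 3))).
Proof.
  intros h. destruct (shifted_log_pos x h). unfold tail_majorant, tail_density.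
  auto_derive; [derive_side_conditions | field; split; lra].
Qed.

Lemma tail_majorant_eq_phi1 x : exp (- t) < x -> tail_majorant x = - phi1 x / 24.
Proof. intros h. destruct (shifted_log_pos x h). unfold phi1, tail_majorant. field. lra. Qed.

Lemma tail_majorant_pos x : exp (- t) < x -> 0 < tail_majorant x.
Proof. intros h. destruct (shifted_log_pos x h). unfold tail_majorant. positivity. Qed.

Lemma tail_density_pos x : exp (- t) < x -> 0 < tail_density x.
Proof. intros h. destruct (shifted_log_pos x h). unfold tail_density. positivity. Qed.

Lemma phi1_neg x : exp (- t) < x -> phi1 x < 0.
Proof.
  intros h. destruct (shifted_log_pos x h). unfold phi1.
  apply Ropp_lt_gt_0_contravar. positivity.
Qed.

Lemma phi2_pos x : exp (- t) < x -> 0 < phi2 x.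
Proof.
  intros h. destruct (shifted_log_pos x h). unfold phi2.
  apply Rdiv_lt_0_compat; [lra | positivity].
Qed.

Lemma phi2_le x y : exp (- t) < x -> x <= y -> phi2 y <= phi2 x.
Proof.
  intros hx hy. pose proof (shifted_log_le x y hx hy). destruct (shifted_log_pos x hx).
  assert (e : forall z, 0 < z -> 0 < t + ln z ->
    phi2 z = / (1 * z ^ 2 * (t + ln z) ^ 2) + 2 * / (1 * z ^ 2 * (t + ln z) ^ 3))
    by (intros z hz hl; unfold phi2; field; lra).
  rewrite !e by lra.
  pose proof (inv_pow_le 1 x y (t + ln x) (t + ln y) 2 2 ltac:(lra) ltac:(lra) ltac:(lra)).
  pose proof (inv_pow_le 1 x y (t + ln x) (t + ln y) 2 3 ltac:(lra) ltac:(lra) ltac:(lra)).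
  lra.
Qed.

Lemma phi3_le x y : exp (- t) < x -> x <= y -> phi3 x <= phi3 y.
Proof.
  intros hx hy. pose proof (shifted_log_le x y hx hy). destruct (shifted_log_pos x hx).
  assert (e : forall z, 0 < z -> 0 < t + ln z ->
    phi3 z = - (2 * / (1 * z ^ 3 * (t + ln z) ^ 2) + 6 * / (1 * z ^ 3 * (t + ln z) ^ 3)
                + 6 * / (1 * z ^ 3 * (t + ln z) ^ 4)))
    by (intros z hz hl; unfold phi3; field; lra).
  rewrite !e by lra.
  pose proof (inv_pow_le 1 x y (t + ln x) (t + ln y) 3 2 ltac:(lra) ltac:(lra) ltac:(lra)).
  pose proof (inv_pow_le 1 x y (t + ln x) (t + ln y) 3 3 ltac:(lra) ltac:(lra) ltac:(lra)).
  pose proof (inv_pow_le 1 x y (t + ln x) (t + ln y) 3 4 ltac:(lra) ltac:(lra) ltac:(lra)).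
  lra.
Qed.

Lemma tail_density_le x y : exp (- t) < x -> x <= y -> tail_density y <= tail_density x.
Proof.
  intros hx hy. pose proof (shifted_log_le x y hx hy). destruct (shifted_log_pos x hx).
  apply inv_pow_le; lra.
Qed.

Lemma tail_density'_le x y : exp (- t) < x -> x <= y -> tail_density' x <= tail_density' y.
Proof.
  intros hx hy. pose proof (shifted_log_le x y hx hy). destruct (shifted_log_pos x hx).
  assert (e : forall z, 0 < z -> 0 < t + ln z ->
    tail_density' z = - (/ (12 * z ^ 3 * (t + ln z) ^ 2) + / (12 * z ^ 3 * (t + ln z) ^ 3)))
    by (intros z hz hl; unfold tail_density'; field; lra).
  rewrite !e by lra.
  pose proof (inv_pow_le 12 x y (t + ln x) (t + ln y) 3 2 ltac:(lra) ltac:(lra) ltac:(lra)).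
  pose proof (inv_pow_le 12 x y (t + ln x) (t + ln y) 3 3 ltac:(lra) ltac:(lra) ltac:(lra)).
  lra.
Qed.

Lemma continuity_pt_phi0 x : exp (- t) < x -> continuity_pt phi0 x.
Proof. intros h. apply (continuity_pt_of_derive _ _ _ (is_derive_phi0 x h)). Qed.

Lemma continuity_pt_tail_density x : exp (- t) < x -> continuity_pt tail_density x.
Proof. intros h. apply (continuity_pt_of_derive _ _ _ (is_derive_tail_density x h)). Qed.

Lemma ex_RInt_of_dom f a b : (forall x, exp (- t) < x -> continuity_pt f x) ->
  exp (- t) < a -> exp (- t) < b -> ex_RInt f a b.
Proof.
  intros hf ha hb. destruct (Rle_dec a b).
  - apply ex_RInt_of_continuity_pt; [lra|]. intros; apply hf; lra.
  - apply ex_RInt_swap, ex_RInt_of_continuity_pt; [lra|]. intros; apply hf; lra.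
Qed.

Lemma is_derive_RInt_of_dom f a x : (forall x, exp (- t) < x -> continuity_pt f x) ->
  exp (- t) < a -> exp (- t) < x -> is_derive (fun z => RInt f a z) x (f x).
Proof.
  intros hf ha hx. assert (hd : 0 < x - exp (- t)) by lra.
  apply (is_derive_RInt f (fun z => RInt f a z) a x).
  - exists (mkposreal _ hd). intros z hz.
    assert (hz' : Rabs (z - x) < x - exp (- t)) by exact hz. apply Rabs_def2 in hz'.
    apply (@RInt_correct R_CompleteNormedModule), ex_RInt_of_dom; auto; lra.
  - apply continuity_pt_filterlim, hf, hx.
Qed.

Definition scaled_li x := li (exp t * x) / exp t.

(* The substitution [u = e^t x] turns [du / ln u] into [e^t phi0 x dx]. *)
Lemma scaled_li_sub x y : exp (- t) < x -> exp (- t) < y ->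
  scaled_li y - scaled_li x = RInt phi0 x y.
Proof.
  intros hx hy. pose proof (exp_pos t) as het.
  assert (he : forall z, exp (- t) < z -> 1 < exp t * z).
  { intros z hz. apply (Rmult_lt_compat_l (exp t)) in hz; [|lra].
    rewrite <- exp_plus, Rplus_opp_r, exp_0 in hz. lra. }
  pose proof (he x hx). pose proof (he y hy).
  assert (hsub : li (exp t * y) - li (exp t * x) = exp t * RInt phi0 x y).
  { rewrite (li_sub (exp t * x) (exp t * y)) by auto.
    replace (exp t * x) with (exp t * x + 0) by ring.
    replace (exp t * y) with (exp t * y + 0) by ring.
    rewrite <- RInt_comp_lin by (rewrite !Rplus_0_r; apply ex_RInt_inv_ln; lra).
    change (exp t * RInt phi0 x y) with (scal (exp t) (RInt phi0 x y)).
    rewrite <- RInt_scal by (apply ex_RInt_of_dom; auto; apply continuity_pt_phi0).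
    apply RInt_ext. intros z hz.
    assert (hzz : exp (- t) < z).
    { destruct (Rle_dec x y); [rewrite Rmin_left in hz | rewrite Rmin_right in hz]; lra. }
    destruct (shifted_log_pos z hzz).
    change (exp t * inv_ln (exp t * z + 0) = exp t * phi0 z).
    unfold inv_ln, phi0. rewrite Rplus_0_r, ln_mult, ln_exp by lra. reflexivity. }
  unfold scaled_li. apply (Rmult_eq_reg_l (exp t)); [|lra]. rewrite <- hsub. field. lra.
Qed.

Lemma is_derive_scaled_li y : exp (- t) < y -> is_derive scaled_li y (phi0 y).
Proof.
  intros hy. assert (hd : 0 < y - exp (- t)) by lra.
  apply (is_derive_ext_loc (fun z => scaled_li y + RInt phi0 y z)).
  - exists (mkposreal _ hd). intros z hz.
    assert (hz' : Rabs (z - y) < y - exp (- t)) by exact hz. apply Rabs_def2 in hz'.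
    rewrite <- scaled_li_sub by lra. exact (Rplus_minus _ _).
  - assert (h : is_derive (fun z => plus (scaled_li y) (RInt phi0 y z)) y (plus zero (phi0 y))).
    { apply (@is_derive_plus R_AbsRing R_NormedModule (fun _ => scaled_li y)
        (fun z => RInt phi0 y z) y zero (phi0 y)); [apply is_derive_const|].
      apply is_derive_RInt_of_dom; auto. apply continuity_pt_phi0. }
    rewrite plus_zero_l in h. exact h.
Qed.

Lemma ex_RInt_tail_density a b : exp (- t) < a -> exp (- t) < b -> ex_RInt tail_density a b.
Proof. apply ex_RInt_of_dom, continuity_pt_tail_density. Qed.

Definition tail_density_plus x := tail_density x + / (12 * x ^ 2 * (t + ln x) ^ 3).

Lemma is_RInt_tail_density_plus a y : exp (- t) < a -> a <= y ->
  is_RInt tail_density_plus a y (tail_majorant a - tail_majorant y).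
Proof.
  intros ha hy.
  replace (tail_majorant a - tail_majorant y)
    with (minus (- tail_majorant y) (- tail_majorant a))
    by (change (- tail_majorant y + - - tail_majorant a = tail_majorant a - tail_majorant y);
        ring).
  apply (is_RInt_derive (fun x => - tail_majorant x)); rewrite Rmin_left, Rmax_right by lra.
  - intros x hx. unfold tail_density_plus.
    rewrite <- (Ropp_involutive (tail_density x + _)).
    apply (is_derive_opp tail_majorant), is_derive_tail_majorant. lra.
  - intros x hx. destruct (shifted_log_pos x ltac:(lra)).
    apply continuity_pt_filterlim, continuity_pt_plus; [apply continuity_pt_tail_density; lra|].
    apply (continuity_pt_of_derive _ (- (2 * x * (t + ln x) ^ 3 + 3 * x * (t + ln x) ^ 2)
      / (12 * (x ^ 2 * (t + ln x) ^ 3) ^ 2))).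
    auto_derive; [repeat split; try lra; apply Rgt_not_eq; positivity|]. field. lra.
Qed.

Lemma RInt_tail_density_bounds a y : exp (- t) < a -> a <= y ->
  (t + ln a) / (t + ln a + 2) * (tail_majorant a - tail_majorant y) <= RInt tail_density a y
  <= tail_majorant a - tail_majorant y.
Proof.
  intros ha hy. destruct (shifted_log_pos a ha) as [hpa hla].
  pose proof (is_RInt_tail_density_plus a y ha hy) as hg.
  assert (hexg : ex_RInt tail_density_plus a y) by (eexists; exact hg).
  assert (hexf : ex_RInt tail_density a y) by (apply ex_RInt_tail_density; lra).
  rewrite <- (is_RInt_unique _ _ _ _ hg).
  split.
  - change ((t + ln a) / (t + ln a + 2) * RInt tail_density_plus a y)
      with (scal ((t + ln a) / (t + ln a + 2)) (RInt tail_density_plus a y)).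
    rewrite <- RInt_scal by exact hexg.
    apply RInt_le; auto; [apply (@ex_RInt_scal R_NormedModule); auto|].
    intros x hx. destruct (shifted_log_pos x ltac:(lra)).
    pose proof (ln_le a x hpa ltac:(lra)).
    change (scal ?k ?v) with (k * v). unfold tail_density_plus, tail_density.
    set (La := t + ln a) in *. set (Lx := t + ln x) in *.
    assert (/ (24 * x ^ 2 * Lx ^ 2) - La / (La + 2) * (/ (24 * x ^ 2 * Lx ^ 2)
               + / (12 * x ^ 2 * Lx ^ 3)) = 2 * (Lx - La) / (24 * x ^ 2 * Lx ^ 3 * (La + 2)))
      by (field; lra).
    assert (0 <= 2 * (Lx - La) / (24 * x ^ 2 * Lx ^ 3 * (La + 2)))
      by (apply Rmult_le_pos; [unfold La, Lx in *; lra | apply Rlt_le; positivity]).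
    lra.
  - apply RInt_le; auto.
    intros x hx. destruct (shifted_log_pos x ltac:(lra)).
    assert (0 < / (12 * x ^ 2 * (t + ln x) ^ 3)) by positivity. unfold tail_density_plus. lra.
Qed.

Lemma RInt_tail_density_nonneg a y : exp (- t) < a -> a <= y -> 0 <= RInt tail_density a y.
Proof.
  intros ha hy. apply RInt_ge_0; [lra | apply ex_RInt_tail_density; lra|].
  intros x hx. apply Rlt_le, tail_density_pos. lra.
Qed.

Lemma RInt_tail_density_le_left a : exp (- t) < a ->
  RInt tail_density a (a + 1) <= tail_density a.
Proof.
  intros ha.
  assert (hc : RInt (fun _ => tail_density a) a (a + 1) = tail_density a).
  { rewrite RInt_const. change ((a + 1 - a) * tail_density a = tail_density a). ring. }
  rewrite <- hc.
  apply RInt_le; [lra | apply ex_RInt_tail_density; lra | apply ex_RInt_const|].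
  intros x hx. apply tail_density_le; lra.
Qed.

Lemma tail_density_mid_le_RInt a : exp (- t) < a ->
  tail_density (a + / 2) <= RInt tail_density a (a + 1).
Proof.
  intros ha.
  pose proof (midpoint_le_increment_of_convex (fun z => RInt tail_density a z) tail_density
    tail_density' (a + / 2)) as hc.
  replace (a + / 2 + / 2) with (a + 1) in hc by field.
  replace (a + / 2 - / 2) with a in hc by field.
  rewrite RInt_point in hc. change zero with 0 in hc. rewrite Rminus_0_r in hc.
  apply hc.
  - intros x hx. split.
    + apply is_derive_RInt_of_dom; [apply continuity_pt_tail_density | auto | lra].
    + apply is_derive_tail_density. lra.
  - intros x y hx hxy hy. apply tail_density'_le; lra.
Qed.

Lemma RInt_infty_tail_density_spec a : exp (- t) < a ->
  (forall y, a <= y -> RInt tail_density a y <= RInt_infty tail_density a) /\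
  (forall eps, eps > 0 -> exists M, a <= M /\
     forall y, y >= M -> RInt_infty tail_density a - eps < RInt tail_density a y).
Proof.
  intros ha.
  set (E := fun v => exists y, a <= y /\ v = RInt tail_density a y).
  assert (hb : bound E).
  { exists (tail_majorant a). intros v [y [hy ->]].
    pose proof (RInt_tail_density_bounds a y ha hy). pose proof (tail_majorant_pos y ltac:(lra)).
    lra. }
  assert (hne : exists v, E v) by (exists (RInt tail_density a a); exists a; split; [lra|auto]).
  destruct (completeness E hb hne) as [L [hub hlub]].
  assert (hle : forall y, a <= y -> RInt tail_density a y <= L)
    by (intros y hy; apply hub; exists y; auto).
  assert (happrox : forall eps, eps > 0 ->
            exists M, a <= M /\ forall y, y >= M -> L - eps < RInt tail_density a y).
  { intros eps he.
    destruct (classic (exists y, a <= y /\ L - eps < RInt tail_density a y))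
      as [[y0 [hy0 hv]] | hn].
    - exists y0. split; auto. intros y hy.
      rewrite <- (RInt_Chasles tail_density a y0 y) by (apply ex_RInt_tail_density; lra).
      pose proof (RInt_tail_density_nonneg y0 y ltac:(lra) ltac:(lra)).
      change (plus ?u ?v) with (u + v). lra.
    - exfalso. assert (L <= L - eps); [|lra].
      apply hlub. intros v [y [hy ->]].
      destruct (Rle_dec (RInt tail_density a y) (L - eps)); auto.
      exfalso. apply hn. exists y. split; [auto | lra]. }
  assert (hL : RInt_infty tail_density a = L).
  { apply RInt_infty_eq; [intros; apply continuity_pt_tail_density; lra|].
    intros eps he. destruct (happrox eps he) as [M [hM hh]]. exists M. intros y hy.
    specialize (hh y hy). specialize (hle y ltac:(lra)).
    rewrite Rabs_minus_sym, Rabs_pos_eq; lra. }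
  rewrite hL. auto.
Qed.

Lemma Un_cv_RInt_tail_density a : exp (- t) < a ->
  Un_cv (fun M => RInt tail_density a (a + INR M)) (RInt_infty tail_density a).
Proof.
  intros ha. destruct (RInt_infty_tail_density_spec a ha) as [hle happrox].
  intros eps he. destruct (happrox eps he) as [M0 [hM0 hh]].
  destruct (INR_unbounded (M0 - a)) as [N hN]. exists N. intros n hn.
  specialize (hN n hn). pose proof (pos_INR n).
  specialize (hh (a + INR n) ltac:(lra)). specialize (hle (a + INR n) ltac:(lra)).
  unfold R_dist. rewrite Rabs_minus_sym, Rabs_pos_eq; lra.
Qed.

Lemma RInt_infty_tail_density_le a : exp (- t) < a ->
  RInt_infty tail_density a <= tail_majorant a.
Proof.
  intros ha. destruct (RInt_infty_tail_density_spec a ha) as [_ happrox].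
  apply le_epsilon. intros eps he. destruct (happrox eps he) as [M [hM hh]].
  specialize (hh M ltac:(lra)). pose proof (RInt_tail_density_bounds a M ha hM).
  pose proof (tail_majorant_pos M ltac:(lra)). lra.
Qed.

Lemma RInt_infty_tail_density_ge a : exp (- t) < a ->
  (t + ln a) / (t + ln a + 2) * tail_majorant a <= RInt_infty tail_density a.
Proof.
  intros ha. destruct (RInt_infty_tail_density_spec a ha) as [hle _].
  destruct (shifted_log_pos a ha) as [hpa hla].
  set (k := (t + ln a) / (t + ln a + 2)).
  assert (hk : 0 <= k) by (apply Rlt_le, Rdiv_lt_0_compat; lra).
  apply le_epsilon. intros eps he.
  set (y := a + / (24 * eps * (t + ln a) ^ 2)).
  assert (hy0 : 0 < / (24 * eps * (t + ln a) ^ 2)) by positivity.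
  assert (hy : a <= y) by (unfold y; lra).
  pose proof (RInt_tail_density_bounds a y ha hy) as [hlow _]. pose proof (hle y hy).
  assert (hsmall : k * tail_majorant y <= eps).
  { pose proof (shifted_log_le a y ha hy).
    assert (k <= 1).
    { unfold k. apply (Rmult_le_reg_r (t + ln a + 2)); [lra|].
      unfold Rdiv. rewrite Rmult_assoc, Rinv_l by lra. lra. }
    assert (tail_majorant y <= eps).
    { unfold tail_majorant. rewrite <- (Rinv_inv eps).
      apply Rinv_le_contravar; [positivity|].
      replace (/ eps) with (24 * (/ (24 * eps * (t + ln a) ^ 2)) * (t + ln a) ^ 2)
        by (field; lra).
      apply Rmult_le_compat;
        [apply Rlt_le; positivity | apply Rlt_le; positivity | | apply pow_incr; lra].
      apply Rmult_le_compat_l; [lra | unfold y; lra]. }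
    pose proof (tail_majorant_pos y ltac:(lra)). nra. }
  fold k in hlow. lra.
Qed.

Lemma scaled_li_increment_bounds a : exp (- t) < a ->
  phi2 (a + 1) / 24 <= scaled_li (a + 1) - scaled_li a - phi0 (a + / 2) <= phi2 a / 24.
Proof.
  intros ha.
  assert (hd : forall x, a <= x <= a + 1 -> is_derive scaled_li x (phi0 x) /\
    is_derive phi0 x (phi1 x) /\ is_derive phi1 x (phi2 x)).
  { intros x hx. assert (h : exp (- t) < x) by lra.
    split; [|split]; [apply is_derive_scaled_li | apply is_derive_phi0 | apply is_derive_phi1];
      exact h. }
  pose proof (midpoint_rule_lower scaled_li phi0 phi1 phi2 (a + / 2) (phi2 (a + 1))) as hlo.
  pose proof (midpoint_rule_upper scaled_li phi0 phi1 phi2 (a + / 2) (phi2 a)) as hup.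
  replace (a + / 2 + / 2) with (a + 1) in hlo, hup by field.
  replace (a + / 2 - / 2) with a in hlo, hup by field.
  split.
  - apply hlo. intros x hx. destruct (hd x ltac:(lra)) as [h1 [h2 h3]].
    split; [|split; [|split]]; auto. apply phi2_le; lra.
  - apply hup. intros x hx. destruct (hd x ltac:(lra)) as [h1 [h2 h3]].
    split; [|split; [|split]]; auto. apply phi2_le; lra.
Qed.

(* With [D = H_k - gamma - ln (k + 1/2)] and [A = t + ln (k + 1/2)], the difference is
   [D / (A (A + D))], and [0 < D <= ln (k + 1) - ln (k + 1/2)]. *)
Lemma harmonic_term_bounds k : exp (- t) < INR k ->
  tail_density (INR k + 1) <= phi0 (INR k + / 2) - / (H k - euler_gamma + t)
  <= tail_density (INR k + / 2).
Proof.
  intros hk. pose proof (pos_INR k) as hk0.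
  destruct (harmonic_sub_gamma_bounds k) as [hlo hup].
  destruct (shifted_log_pos (INR k + / 2) ltac:(lra)) as [_ hA].
  set (A := t + ln (INR k + / 2)) in *.
  set (D := H k - euler_gamma - ln (INR k + / 2)) in *.
  assert (hlo0 : 0 < / (24 * (INR k + 1) ^ 2)) by positivity.
  replace (H k - euler_gamma + t) with (A + D) by (unfold A, D; ring).
  unfold phi0. fold A.
  replace (/ A - / (A + D)) with (D / (A * (A + D))) by (field; lra).
  split.
  - assert (hgap : / (2 * (INR k + 1)) <= ln (INR k + 1) - ln (INR k + / 2)).
    { rewrite <- ln_div by lra.
      pose proof (ln_ge_1_sub_inv ((INR k + 1) / (INR k + / 2))
                    ltac:(apply Rdiv_lt_0_compat; lra)) as hl.
      replace (1 - / ((INR k + 1) / (INR k + / 2))) with (/ (2 * (INR k + 1))) in hl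
        by (field; lra). exact hl. }
    assert (/ (24 * (INR k + / 2) ^ 2) <= / (2 * (INR k + 1)))
      by (apply Rinv_le_contravar; nra).
    set (L1 := t + ln (INR k + 1)).
    assert (A + D <= L1) by (unfold L1, A; lra).
    unfold tail_density. fold L1.
    replace (/ (24 * (INR k + 1) ^ 2 * L1 ^ 2)) with (/ (24 * (INR k + 1) ^ 2) / (L1 * L1))
      by (field; split; lra).
    apply Rmult_le_compat; [lra | apply Rlt_le, Rinv_0_lt_compat; nra | lra |].
    apply Rinv_le_contravar; [nra | apply Rmult_le_compat; lra].
  - unfold tail_density. fold A.
    replace (/ (24 * (INR k + / 2) ^ 2 * A ^ 2)) with (/ (24 * (INR k + / 2) ^ 2) / (A * A))
      by (field; split; lra).
    apply Rmult_le_compat; [lra | apply Rlt_le, Rinv_0_lt_compat; nra | lra |].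
    apply Rinv_le_contravar; [nra | apply Rmult_le_compat_l; lra].
Qed.

Definition beta_increment k :=
  scaled_li (INR k + 1) - scaled_li (INR k) - / (H k - euler_gamma + t).

Lemma beta_increment_bounds k : exp (- t) < INR k ->
  phi2 (INR k + 1) / 24 + tail_density (INR k + 1) <= beta_increment k
  <= phi2 (INR k) / 24 + tail_density (INR k + / 2).
Proof.
  intros hk. pose proof (scaled_li_increment_bounds (INR k) hk).
  pose proof (harmonic_term_bounds k hk). unfold beta_increment. lra.
Qed.

Lemma phi1_increment_le a : exp (- t) < a -> phi1 (a + 1) - phi1 a <= phi2 a.
Proof.
  intros ha.
  assert (h : phi1 (a + 1) - phi1 a <= phi2 a * (a + 1 - a)).
  { apply (increment_le_of_derive_le phi1 phi2); [lra|]. intros x hx.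
    split; [apply is_derive_phi1 | apply phi2_le]; lra. }
  lra.
Qed.

Lemma phi2_le_phi1_increment m : exp (- t) < m - / 2 -> phi2 m <= phi1 (m + / 2) - phi1 (m - / 2).
Proof.
  intros hm. apply midpoint_le_increment_of_convex with (dpsi := phi3).
  - intros x hx. split; [apply is_derive_phi1 | apply is_derive_phi2]; lra.
  - intros x y hx hxy hy. apply phi3_le; lra.
Qed.

Fixpoint increment_sum n M :=
  match M with O => 0 | S M' => increment_sum n M' + beta_increment (n + M') end.

Lemma increment_sum_lower n M : exp (- t) < INR n ->
  (phi1 (INR n + INR M + 1) - phi1 (INR n + 1)) / 24
  + RInt tail_density (INR n + 1) (INR n + INR M + 1) <= increment_sum n M.
Proof.
  intros hn. induction M as [|M IH].
  - simpl. rewrite Rplus_0_r, RInt_point. change zero with 0. lra.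
  - simpl increment_sum. rewrite S_INR. pose proof (pos_INR M).
    set (a := INR n + INR M + 1).
    assert (hk : exp (- t) < INR (n + M)) by (rewrite plus_INR; lra).
    pose proof (beta_increment_bounds _ hk) as [hl _]. rewrite plus_INR in hl. fold a in hl.
    pose proof (phi1_increment_le a ltac:(unfold a; lra)).
    pose proof (RInt_tail_density_le_left a ltac:(unfold a; lra)).
    replace (INR n + (INR M + 1) + 1) with (a + 1) by (unfold a; ring).
    rewrite <- (RInt_Chasles tail_density (INR n + 1) a (a + 1))
      by (apply ex_RInt_tail_density; unfold a; lra).
    change (plus ?x ?y) with (x + y). fold a in IH. lra.
Qed.

Lemma increment_sum_upper_S n M : exp (- t) < INR n ->
  increment_sum n (S M) <= phi2 (INR n) / 24
    + (phi1 (INR n + INR M + / 2) - phi1 (INR n + / 2)) / 24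
    + RInt tail_density (INR n) (INR n + INR M + 1).
Proof.
  intros hn. induction M as [|M IH].
  - simpl. rewrite Nat.add_0_r, Rplus_0_r, Rminus_eq_0. pose proof (beta_increment_bounds n hn).
    pose proof (tail_density_mid_le_RInt (INR n) hn). lra.
  - change (increment_sum n (S (S M))) with (increment_sum n (S M) + beta_increment (n + S M)).
    rewrite S_INR. pose proof (pos_INR M).
    set (a := INR n + INR M + 1).
    assert (hk : exp (- t) < INR (n + S M)) by (rewrite plus_INR, S_INR; lra).
    pose proof (beta_increment_bounds _ hk) as [_ hu].
    rewrite plus_INR, S_INR in hu. replace (INR n + (INR M + 1)) with a in hu by (unfold a; ring).
    pose proof (phi2_le_phi1_increment a ltac:(unfold a; lra)).
    pose proof (tail_density_mid_le_RInt a ltac:(unfold a; lra)).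
    replace (INR n + (INR M + 1) + / 2) with (a + / 2) by (unfold a; ring).
    replace (INR n + (INR M + 1) + 1) with (a + 1) by (unfold a; ring).
    replace (INR n + INR M + / 2) with (a - / 2) in IH by (unfold a; field).
    fold a in IH.
    rewrite <- (RInt_Chasles tail_density (INR n) a (a + 1))
      by (apply ex_RInt_tail_density; unfold a; lra).
    change (plus ?x ?y) with (x + y). lra.
Qed.

Lemma increment_sum_upper n M : exp (- t) < INR n ->
  increment_sum n M <= phi2 (INR n) / 24 + tail_majorant (INR n + / 2)
    + RInt tail_density (INR n) (INR n + INR M).
Proof.
  intros hn. pose proof (phi2_pos _ hn). pose proof (tail_majorant_pos (INR n + / 2) ltac:(lra)).
  destruct M as [|M].
  - simpl. rewrite Rplus_0_r, RInt_point. change zero with 0. lra.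
  - pose proof (increment_sum_upper_S n M hn). rewrite S_INR. pose proof (pos_INR M).
    rewrite tail_majorant_eq_phi1 by lra.
    pose proof (phi1_neg (INR n + INR M + / 2) ltac:(lra)).
    replace (INR n + (INR M + 1)) with (INR n + INR M + 1) by ring. lra.
Qed.

Variable r : R.
Hypothesis hr : r > exp (- t).

Lemma ceilZ_le_dom n : (ceilZ r <= Z.of_nat n)%Z -> exp (- t) < INR n.
Proof.
  intros h. pose proof (ceilZ_ge r). apply IZR_le in h. rewrite <- INR_IZR_INZ in h. lra.
Qed.

Lemma beta_x_add n M : (ceilZ r <= Z.of_nat n)%Z ->
  beta_x t r (INR (n + M)) = beta_x t r (INR n) + increment_sum n M.
Proof.
  intros hn. induction M as [|M IH]; [rewrite Nat.add_0_r; simpl; ring|].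
  replace (n + S M)%nat with (S (n + M)) by lia. simpl increment_sum. rewrite <- Rplus_assoc, <- IH.
  unfold beta_x, beta_increment, scaled_li. rewrite !ceilZ_INR.
  replace (Z.to_nat (Z.of_nat (S (n + M)) - ceilZ r))
    with (S (Z.to_nat (Z.of_nat (n + M) - ceilZ r))) by lia.
  rewrite sumZ_S.
  replace (ceilZ r + Z.of_nat (Z.to_nat (Z.of_nat (n + M) - ceilZ r)))%Z
    with (Z.of_nat (n + M)) by lia.
  rewrite Nat2Z.id, S_INR. ring.
Qed.

Lemma Un_cv_increment_sum n : (ceilZ r <= Z.of_nat n)%Z ->
  Un_cv (increment_sum n) (beta t r - beta_x t r (INR n)).
Proof.
  intros hc. pose proof (ceilZ_le_dom n hc) as hn.
  destruct (RInt_infty_tail_density_spec (INR n) hn) as [hle _].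
  assert (hgr : Un_growing (increment_sum n)).
  { intros M. simpl. pose proof (pos_INR M).
    assert (hk : exp (- t) < INR (n + M)) by (rewrite plus_INR; lra).
    pose proof (beta_increment_bounds _ hk) as [hl _].
    pose proof (phi2_pos (INR (n + M) + 1) ltac:(lra)).
    pose proof (tail_density_pos (INR (n + M) + 1) ltac:(lra)). lra. }
  assert (hub : has_ub (increment_sum n)).
  { exists (phi2 (INR n) / 24 + tail_majorant (INR n + / 2) + RInt_infty tail_density (INR n)).
    intros x [M ->]. pose proof (increment_sum_upper n M hn). pose proof (pos_INR M).
    pose proof (hle (INR n + INR M) ltac:(lra)). lra. }
  destruct (growing_cv _ hgr hub) as [S hS].
  replace (beta t r - beta_x t r (INR n)) with S; [exact hS|].
  assert (hb : beta t r = beta_x t r (INR n) + S).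
  { unfold beta. apply lim_seq_eq. apply (CV_shift _ n).
    apply (Un_cv_eventually_eq _ (fun M => beta_x t r (INR n) + increment_sum n M) _ 0).
    - intros M _. rewrite Nat.add_comm. apply beta_x_add, hc.
    - apply CV_plus; [apply Un_cv_const | exact hS]. }
  lra.
Qed.

Lemma Un_cv_phi1 a : exp (- t) < a -> Un_cv (fun M => phi1 (a + INR M + 1)) 0.
Proof.
  intros ha. destruct (shifted_log_pos a ha).
  apply (Un_cv_0_of_le_inv _ (/ (t + ln a) ^ 2) 0). intros M _. pose proof (pos_INR M).
  pose proof (shifted_log_le a (a + INR M + 1) ha ltac:(lra)).
  rewrite Rabs_left by (apply phi1_neg; lra). unfold phi1. rewrite Ropp_involutive.
  rewrite <- Rinv_mult. apply Rinv_le_contravar; [positivity|].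
  rewrite Rmult_comm. apply Rmult_le_compat; [apply Rlt_le; positivity | apply pow_le; lra | lra |].
  apply pow_incr; lra.
Qed.

Lemma beta_remainder_bounds n : (ceilZ r <= Z.of_nat n)%Z ->
  tail_majorant (INR n + 1) + RInt_infty tail_density (INR n + 1)
  <= beta t r - beta_x t r (INR n)
  <= RInt_infty tail_density (INR n) + tail_majorant (INR n + / 2) + phi2 (INR n) / 24.
Proof.
  intros hc. pose proof (ceilZ_le_dom n hc) as hn. pose proof (Un_cv_increment_sum n hc) as hS.
  split.
  - refine (Rle_cv_lim (fun M => increment_sum_lower n M hn) _ hS).
    rewrite tail_majorant_eq_phi1 by lra.
    replace (- phi1 (INR n + 1) / 24) with ((0 - phi1 (INR n + 1)) * / 24) by field.
    apply CV_plus; [apply CV_mult; [apply CV_minus|]; [apply Un_cv_phi1 | | ]; auto;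
      apply Un_cv_const|].
    apply (Un_cv_eventually_eq _ (fun M => RInt tail_density (INR n + 1) (INR n + 1 + INR M)) _ 0).
    + intros M _. f_equal. ring.
    + apply Un_cv_RInt_tail_density. lra.
  - destruct (RInt_infty_tail_density_spec (INR n) hn) as [hle _].
    refine (Rle_cv_lim _ hS (Un_cv_const _)). intros M.
    pose proof (increment_sum_upper n M hn). pose proof (pos_INR M).
    pose proof (hle (INR n + INR M) ltac:(lra)). lra.
Qed.

Lemma eventually_dom : exists N, forall n, (N <= n)%nat -> 2 <= INR n /\ exp (- t) < INR n.
Proof.
  destruct (INR_unbounded (Rmax 2 (exp (- t) + 1))) as [N hN]. exists N. intros n hn.
  specialize (hN n hn). pose proof (Rmax_l 2 (exp (- t) + 1)).
  pose proof (Rmax_r 2 (exp (- t) + 1)). lra.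
Qed.

Lemma Un_cv_ln_div_shifted_ln a : 0 <= a <= 1 ->
  Un_cv (fun n => ln (INR n) / (t + ln (INR n + a))) 1.
Proof.
  intros ha. destruct eventually_dom as [N hN].
  apply (Un_cv_of_close _ (fun _ => 1) (fun n => (Rabs t + 1) * / (t + ln (INR n + a))) 1 N).
  - intros n hn. destruct (hN n hn) as [h2 hd].
    destruct (shifted_log_pos (INR n + a) ltac:(lra)).
    assert (hl : 0 <= ln (INR n + a) - ln (INR n) <= 1).
    { pose proof (ln_le (INR n) (INR n + a) ltac:(lra) ltac:(lra)).
      rewrite <- ln_div by lra.
      pose proof (ln_le_sub_1 ((INR n + a) / INR n) ltac:(apply Rdiv_lt_0_compat; lra)).
      replace ((INR n + a) / INR n - 1) with (a / INR n) in * by (field; lra).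
      assert (a / INR n <= 1).
      { apply (Rmult_le_reg_r (INR n)); [lra|]. unfold Rdiv.
        rewrite Rmult_assoc, Rinv_l by lra. lra. }
      rewrite ln_div in * by lra. lra. }
    replace (ln (INR n) / (t + ln (INR n + a)) - 1)
      with (- (t + (ln (INR n + a) - ln (INR n))) * / (t + ln (INR n + a))) by (field; lra).
    rewrite Rabs_mult, (Rabs_pos_eq (/ _)) by (apply Rlt_le; positivity).
    apply Rmult_le_compat_r; [apply Rlt_le; positivity|].
    rewrite Rabs_Ropp. pose proof (Rabs_triang t (ln (INR n + a) - ln (INR n))).
    rewrite (Rabs_pos_eq (ln (INR n + a) - ln (INR n))) in * by lra. lra.
  - apply Un_cv_const.
  - replace 0 with ((Rabs t + 1) * 0) by ring.
    apply CV_mult; [apply Un_cv_const | apply Un_cv_inv_shifted_ln; lra].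
Qed.

Definition weight n := 12 * INR n * ln (INR n) ^ 2.

Lemma Un_cv_weight_tail_majorant a : 0 <= a <= 1 ->
  Un_cv (fun n => weight n * tail_majorant (INR n + a)) (/ 2).
Proof.
  intros ha. destruct eventually_dom as [N hN].
  set (q := fun n => ln (INR n) / (t + ln (INR n + a))).
  apply (Un_cv_eventually_eq _ (fun n => / 2 * (INR n / (INR n + a)) * (q n * q n)) _ N).
  - intros n hn. destruct (hN n hn) as [h2 hd].
    destruct (shifted_log_pos (INR n + a) ltac:(lra)).
    unfold weight, tail_majorant, q. field. split; lra.
  - replace (/ 2) with (/ 2 * 1 * (1 * 1)) at 1 by ring.
    apply CV_mult; [apply CV_mult; [apply Un_cv_const | apply Un_cv_INR_div_add; lra]|].
    apply CV_mult; apply Un_cv_ln_div_shifted_ln; auto.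
Qed.

Lemma Un_cv_weight_phi2 : Un_cv (fun n => weight n * (phi2 (INR n) / 24)) 0.
Proof.
  destruct eventually_dom as [N hN].
  set (q := fun n => ln (INR n) / (t + ln (INR n + 0))).
  apply (Un_cv_eventually_eq _
    (fun n => / 2 * (q n * q n) * (/ INR n * (1 + 2 * / (t + ln (INR n + 0))))) _ N).
  - intros n hn. destruct (hN n hn) as [h2 hd]. destruct (shifted_log_pos _ hd).
    unfold q. rewrite Rplus_0_r. unfold weight, phi2. field. split; lra.
  - replace 0 with (/ 2 * (1 * 1) * (0 * (1 + 2 * 0))) by ring.
    apply CV_mult; [apply CV_mult; [apply Un_cv_const|]|].
    + apply CV_mult; apply Un_cv_ln_div_shifted_ln; lra.
    + apply CV_mult; [exact Un_cv_inv_INR | apply CV_plus; [apply Un_cv_const|]].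
      apply CV_mult; [apply Un_cv_const | apply Un_cv_inv_shifted_ln; lra].
Qed.

Lemma Un_cv_shifted_log_ratio :
  Un_cv (fun n => (t + ln (INR n + 1)) / (t + ln (INR n + 1) + 2)) 1.
Proof.
  destruct eventually_dom as [N hN].
  apply (Un_cv_eventually_eq _ (fun n => 1 - 2 * / ((t + 2) + ln (INR n + 1))) _ N).
  - intros n hn. destruct (hN n hn) as [h2 hd].
    destruct (shifted_log_pos (INR n + 1) ltac:(lra)). field. lra.
  - replace 1 with (1 - 2 * 0) at 1 by ring.
    apply CV_minus; [apply Un_cv_const|].
    apply CV_mult; [apply Un_cv_const | apply Un_cv_inv_shifted_ln; lra].
Qed.

Lemma Un_cv_beta_remainder :
  Un_cv (fun n => (beta t r - beta_x t r (INR n)) * weight n) 1.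
Proof.
  destruct eventually_dom as [N1 hN1].
  set (kappa := fun n => (t + ln (INR n + 1)) / (t + ln (INR n + 1) + 2)).
  set (maj := fun a n => weight n * tail_majorant (INR n + a)).
  apply (Un_cv_squeeze (fun n => maj 1 n + kappa n * maj 1 n) _
    (fun n => maj 0 n + maj (/ 2) n + weight n * (phi2 (INR n) / 24)) 1
    (max N1 (Z.to_nat (ceilZ r)))).
  - intros n hn. destruct (hN1 n ltac:(lia)) as [h2 hd].
    assert (hc : (ceilZ r <= Z.of_nat n)%Z).
    { pose proof (ceilZ_ge r). pose proof (exp_pos (- t)).
      assert (h0 : 0 < IZR (ceilZ r)) by lra. apply lt_0_IZR in h0. lia. }
    destruct (beta_remainder_bounds n hc) as [b1 b2].
    pose proof (RInt_infty_tail_density_le (INR n) hd).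
    pose proof (RInt_infty_tail_density_ge (INR n + 1) ltac:(lra)).
    assert (hw : 0 <= weight n)
      by (unfold weight; apply Rmult_le_pos; [pose proof (pos_INR n); lra | apply pow2_ge_0]).
    unfold maj, kappa. rewrite Rplus_0_r. rewrite (Rmult_comm _ (weight n)).
    split.
    + replace (weight n * tail_majorant (INR n + 1)
               + (t + ln (INR n + 1)) / (t + ln (INR n + 1) + 2)
                 * (weight n * tail_majorant (INR n + 1)))
        with (weight n * (tail_majorant (INR n + 1) + (t + ln (INR n + 1))
               / (t + ln (INR n + 1) + 2) * tail_majorant (INR n + 1))) by ring.
      apply Rmult_le_compat_l; lra.
    + rewrite <- !Rmult_plus_distr_l. apply Rmult_le_compat_l; lra.
  - replace 1 with (/ 2 + 1 * / 2) by field.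
    apply CV_plus; [|apply CV_mult]; [apply Un_cv_weight_tail_majorant; lra
      | exact Un_cv_shifted_log_ratio | apply Un_cv_weight_tail_majorant; lra].
  - replace 1 with (/ 2 + / 2 + 0) by field.
    apply CV_plus; [apply CV_plus|]; [apply Un_cv_weight_tail_majorant; lra
      | apply Un_cv_weight_tail_majorant; lra | exact Un_cv_weight_phi2].
Qed.

End Shifted_log.

Theorem corollary3p10 (t r : R) (hr : r > exp (- t)) :
  (forall n : nat, (ceilZ r <= Z.of_nat n)%Z ->
     RInt_infty (fun x => / (24 * x ^ 2 * (t + ln x) ^ 2)) (INR n + 1)
       + / (24 * (INR n + 1) * (t + ln (INR n + 1)) ^ 2)
     <= beta t r - beta_x t r (INR n)
     /\
     beta t r - beta_x t r (INR n)
     <= RInt_infty (fun x => / (24 * x ^ 2 * (t + ln x) ^ 2)) (INR n)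
        + / (24 * (INR n + / 2) * (t + ln (INR n + / 2)) ^ 2)
        + / (24 * (INR n) ^ 2 * (t + ln (INR n)) ^ 2)
        + / (12 * (INR n) ^ 2 * (t + ln (INR n)) ^ 3))
  /\
  Un_cv (fun n => (beta t r - beta_x t r (INR n)) * (12 * INR n * (ln (INR n)) ^ 2)) 1.
Proof.
  split; [|exact (Un_cv_beta_remainder t r hr)].
  intros n hc. destruct (beta_remainder_bounds t r hr n hc) as [hlo hup].
  destruct (shifted_log_pos t (INR n) (ceilZ_le_dom t r hr n hc)).
  assert (phi2 t (INR n) / 24 = / (24 * INR n ^ 2 * (t + ln (INR n)) ^ 2)
                               + / (12 * INR n ^ 2 * (t + ln (INR n)) ^ 3))
    by (unfold phi2; field; lra).
  unfold tail_majorant in *. fold (tail_density t). split; lra.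
Qed.
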